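(* If $\mathcal{F}:\mathcal{T}^Y\to\mathcal{T}^Z$ is a cover between trees of spheres, then the underlying map $F:T^Y\to T^Z$ is surjective (on vertices and edges).
   Context: Trees are finite connected graphs without cycles (vertex set $V$, edges $2$-element subsets of $V$, $E_v$ the set of edges containing $v$), regarded as the set $V\sqcup E$; leaves are vertices of valence $1$, the others are internal vertices ($IV$). A tree of spheres $\mathcal{T}^X$ marked by a finite set $X$ ($\ge3$ elements) consists of a tree $T^X$ whose leaf set is $X$ and, for each internal vertex $v$, a topological $2$-sphere $\mathcal{S}_v$ and an injection $i_v:E_v\to\mathcal{S}_v$; $X_v:=i_v(E_v)$. A cover $\mathcal{F}:\mathcal{T}^Y\to\mathcal{T}^Z$ consists of a map $F:T^Y\to T^Z$ sending vertices to vertices and each edge $\{v,w\}$ to the edge $\{F(v),F(w)\}$, with $F(Y)\subseteq Z$ and $F(IV^Y)\subseteq IV^Z$, and for each $v\in IV^Y$, $w=F(v)$, a topological branched covering $f_v:\mathcal{S}_v\to\mathcal{S}_w$ such that $f_v:\mathcal{S}_v\setminus Y_v\to\mathcal{S}_w\setminus Z_w$ is a covering map, $f_v\circ i_v=i_w\circ F$ on $E_v$, and for an edge $e=\{v_1,v_2\}$ between internal vertices $\deg_{i_{v_1}(e)}f_{v_1}=\deg_{i_{v_2}(e)}f_{v_2}$. *)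

From HB Require Import structures.
From mathcomp Require Import all_boot all_order all_algebra.
From mathcomp Require Import all_classical all_reals all_analysis.
From mathcomp Require Import Rstruct Rstruct_topology.

Set Implicit Arguments.
Unset Strict Implicit.
Unset Printing Implicit Defensive.

Import Order.TTheory GRing.Theory Num.Theory.
Local Open Scope classical_set_scope.
Local Open Scope ring_scope.

Notation RR := Rdefinitions.RbaseSymbolsImpl.R.

Definition valence (V : finType) (e : rel V) (v : V) : nat := #|[set w | e v w]|.
Definition is_leaf (V : finType) (e : rel V) (v : V) : bool := valence e v == 1%N.
Definition is_internal (V : finType) (e : rel V) (v : V) : bool := ~~ is_leaf e v.

Definition acyclic (V : finType) (e : rel V) : Prop :=
  ~ exists (x : V) (p : seq V),
      [/\ (2 <= size p)%N, uniq (x :: p), path e x p & e (last x p) x].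

Definition is_tree (V : finType) (e : rel V) : Prop :=
  [/\ symmetric e, irreflexive e, (forall x y, connect e x y) & acyclic e].

Definition unit_sphere : set (RR * RR * RR) :=
  [set p | p.1.1 ^+ 2 + p.1.2 ^+ 2 + p.2 ^+ 2 = 1].

Definition open_disk : set (RR * RR) := [set p | p.1 ^+ 2 + p.2 ^+ 2 < 1].

(* complex multiplication on R^2 and the power map z |-> z^d *)
Definition cmul (p q : RR * RR) : RR * RR :=
  (p.1 * q.1 - p.2 * q.2, p.1 * q.2 + p.2 * q.1).
Fixpoint cpow (d : nat) (p : RR * RR) : RR * RR :=
  match d with
  | O => (1, 0)
  | S d' => cmul (cpow d' p) p
  end.

(* a topological 2-sphere: a space homeomorphic to the unit sphere of R^3,
   i.e. admitting a topological embedding into R^3 with image the unit sphere *)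
Definition is_top_sphere (S : topologicalType) : Prop :=
  exists h : S -> RR * RR * RR,
    [/\ continuous h, injective h, range h = unit_sphere &
        forall O : set S, open O ->
          exists W : set (RR * RR * RR), open W /\ h @` O = W `&` unit_sphere].

(* phi restricted to U is a homeomorphism of the open set U onto the open
   unit disk, sending x to 0 *)
Definition disk_chart (S : topologicalType) (U : set S) (x : S)
    (phi : S -> RR * RR) : Prop :=
  [/\ open U, U x, phi x = (0, 0) &
    [/\ {within U, continuous phi},
      (forall y z, U y -> U z -> phi y = phi z -> y = z),
      phi @` U = open_disk &
      forall O : set S, open O -> O `<=` U -> open (phi @` O)]].

(* f has the local model z |-> z^d at x (d = local degree of f at x) *)
Definition local_model (A B : topologicalType) (f : A -> B) (x : A) (d : nat)
  : Prop :=
  (0 < d)%N /\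
  exists (U : set A) (W : set B) (phi : A -> RR * RR) (psi : B -> RR * RR),
    [/\ disk_chart U x phi, disk_chart W (f x) psi, f @` U `<=` W &
        forall y, U y -> psi (f y) = cpow d (phi y)].

Definition branched_covering (A B : topologicalType) (f : A -> B)
    (deg : A -> nat) : Prop :=
  continuous f /\ forall x, local_model f x (deg x).

Definition homeo_onto (A B : topologicalType) (f : A -> B)
    (P : set A) (W : set B) : Prop :=
  [/\ (forall y z, P y -> P z -> f y = f z -> y = z),
      f @` P = W &
      forall O : set A, open O -> O `<=` P -> open (f @` O)].

(* f (continuous) restricts to a covering map A' -> B' (Munkres' definition:
   surjective, every point of B' has an evenly covered open neighbourhood) *)
Definition covering_map_on (A B : topologicalType) (f : A -> B)
    (A' : set A) (B' : set B) : Prop :=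
  f @` A' = B' /\
  forall b, B' b ->
    exists W : set B, [/\ open W, W `<=` B', W b &
      exists (I : Type) (P : I -> set A),
        [/\ (forall i, open (P i)),
            (forall i j, i <> j -> P i `&` P j = set0),
            (forall a, (exists i, P i a) <-> (A' a /\ W (f a))) &
            forall i, homeo_onto f (P i) W]].

(* The marking set X is the set of leaves of the tree.  An edge {v,w} is
   seen at v as the neighbour w; so i v : V -> S v restricted to the
   neighbours of v encodes the injection i_v : E_v -> S_v. *)
Record tree_of_spheres := TreeOfSpheres {
  tvert : finType;
  tadj : rel tvert;
  tadj_tree : is_tree tadj;
  tleaves_ge3 : (3 <= #|[set v | is_leaf tadj v]|)%N;
  tsphere : tvert -> topologicalType;
  tsphere_top : forall v, is_internal tadj v -> is_top_sphere (tsphere v);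
  tinj : forall v : tvert, tvert -> tsphere v;
  tinj_inj : forall v, is_internal tadj v ->
    forall w1 w2, tadj v w1 -> tadj v w2 -> tinj v w1 = tinj v w2 -> w1 = w2
}.

Definition marked_pts (T : tree_of_spheres) (v : tvert T) : set (tsphere v) :=
  [set tinj v w | w in [set w | tadj v w]].

Arguments marked_pts : clear implicits.
Arguments marked_pts {T} v.
Record tos_cover (TY TZ : tree_of_spheres) := Cover {
  cF : tvert TY -> tvert TZ;
  cF_edge : forall v w, tadj v w -> tadj (cF v) (cF w);
  cF_leaf : forall v, is_leaf (tadj (t:=TY)) v -> is_leaf (tadj (t:=TZ)) (cF v);
  cF_internal : forall v, is_internal (tadj (t:=TY)) v ->
                          is_internal (tadj (t:=TZ)) (cF v);
  cf : forall v : tvert TY, tsphere v -> tsphere (cF v);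
  cdeg : forall v : tvert TY, tsphere v -> nat;
  cf_branched : forall v, is_internal (tadj (t:=TY)) v ->
    branched_covering (@cf v) (@cdeg v);
  cf_covering : forall v, is_internal (tadj (t:=TY)) v ->
    covering_map_on (@cf v) (~` (marked_pts v)) (~` (marked_pts (cF v)));
  cf_compat : forall v, is_internal (tadj (t:=TY)) v ->
    forall w, tadj v w -> @cf v (tinj v w) = tinj (cF v) (cF w);
  cdeg_edge : forall v1 v2,
    is_internal (tadj (t:=TY)) v1 -> is_internal (tadj (t:=TY)) v2 ->
    tadj v1 v2 -> @cdeg v1 (tinj v1 v2) = @cdeg v2 (tinj v2 v1)
}.
Arguments cf {TY TZ} t v _.
Arguments cdeg {TY TZ} t v _.
Arguments cF {TY TZ} t _.

From mathcomp Require Import all_boot all_order all_algebra.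
From mathcomp Require Import all_classical all_reals all_analysis.
From mathcomp Require Import Rstruct Rstruct_topology lra ring.

Set Implicit Arguments.
Unset Strict Implicit.
Unset Printing Implicit Defensive.

Import Order.TTheory GRing.Theory Num.Theory.
Import numFieldNormedType.Exports.
Local Open Scope classical_set_scope.
Local Open Scope ring_scope.

(* The local maps of a cover are surjective: f_v is a branched covering of
   compact spheres whose image contains every unmarked point, so its image is
   closed and cofinite, and since a sphere has no isolated points it is
   everything.  A marked point i_w(u), with u adjacent to w = F v, therefore
   has a preimage, which must be marked, i.e. of the form i_v(x); by
   compatibility i_w(F x) = i_w(u), so F x = u.  At a leaf v, F v is a leaf
   and its unique neighbour is the image of that of v.  Hence neighbours of
   F v lift to neighbours of v, and paths of the connected tree T^Z lift
   from any vertex of T^Y. *)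

Lemma circle_not_isolated (a b e : RR) : 0 < a ^+ 2 + b ^+ 2 -> 0 < e ->
  exists a' b', [/\ a' ^+ 2 + b' ^+ 2 = a ^+ 2 + b ^+ 2,
    `|a - a'| < e, `|b - b'| < e & (a', b') != (a, b)].
Proof.
move=> ab_gt0 e_gt0.
pose M := 1 + a ^+ 2 + b ^+ 2.
have M_gt0 : 0 < M by rewrite /M; have := sqr_ge0 a; have := sqr_ge0 b; lra.
have aM : `|a| <= M by have := sqr_ge0 (`|a| - 1); rewrite /M -(real_normK (num_real a)); nra.
have bM : `|b| <= M by have := sqr_ge0 (`|b| - 1); rewrite /M -(real_normK (num_real b)); nra.
pose t := Num.min 1 (e / (8 * M)).
have t_gt0 : 0 < t by rewrite lt_min ltr01 divr_gt0 // mulr_gt0.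
have t_le1 : t <= 1 by rewrite ge_min lexx.
have tM : 8 * M * t <= e.
  have : t <= e / (8 * M) by rewrite ge_min lexx orbT.
  by rewrite ler_pdivlMr ?mulr_gt0 // mulrC.
(* rational parametrisation of the rotation by angle 2 atan t *)
pose c := (1 - t ^+ 2) / (1 + t ^+ 2).
pose s := 2 * t / (1 + t ^+ 2).
have D_ge1 : 1 <= 1 + t ^+ 2 by have := sqr_ge0 t; lra.
have D_neq0 : 1 + t ^+ 2 != 0 by apply: lt0r_neq0; lra.
have cs1 : c ^+ 2 + s ^+ 2 = 1 by rewrite /c /s; field.
have c_bound : 0 <= 1 - c <= 2 * t ^+ 2.
  have -> : 1 - c = 2 * t ^+ 2 / (1 + t ^+ 2) by rewrite /c; field.
  by rewrite divr_ge0 ?ler_pdivrMr //=; nra.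
have s_bound : 0 < s <= 2 * t.
  by rewrite /s divr_gt0 ?ler_pdivrMr //=; nra.
clearbody M t c s.
have small (x y : RR) : `|x| <= M -> `|y| <= M -> `|x * (1 - c) + y * s| < e.
  move=> xM yM; apply: le_lt_trans (ler_normD _ _) _; rewrite !normrM.
  case/andP: c_bound => c_ge c_le; case/andP: s_bound => s_gt s_le.
  rewrite (ger0_norm c_ge) (gtr0_norm s_gt).
  have := normr_ge0 x; have := normr_ge0 y; nra.
exists (a * c - b * s), (a * s + b * c); split.
- have -> : (a * c - b * s) ^+ 2 + (a * s + b * c) ^+ 2 =
    (a ^+ 2 + b ^+ 2) * (c ^+ 2 + s ^+ 2) by ring.
  by rewrite cs1 mulr1.
- have -> : a - (a * c - b * s) = a * (1 - c) + b * s by ring.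
  exact: small.
- have -> : b - (a * s + b * c) = b * (1 - c) + (- a) * s by ring.
  by apply: small; rewrite ?normrN.
- apply/negP => /eqP [ea eb].
  have : (a ^+ 2 + b ^+ 2) * s = 0.
    have -> : (a ^+ 2 + b ^+ 2) * s =
      a * ((a * s + b * c) - b) - b * ((a * c - b * s) - a) by ring.
    by rewrite ea eb !subrr; ring.
  by move/eqP; rewrite mulf_eq0 !gt_eqF //; case/andP: s_bound.
Qed.

Lemma unit_sphere_not_isolated (q : RR * RR * RR) (W : set (RR * RR * RR)) :
  unit_sphere q -> nbhs q W -> exists p, [/\ unit_sphere p, W p & p != q].
Proof.
case: q => [[a b] c]; rewrite /unit_sphere /= => abc1.
case=> -[P Q] [/= [[P1 P2] [/= Pa Pb] /= P12] Qc] /= PQW.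
have near_in (x : RR) (A : set RR) : nbhs x A ->
    exists2 e : RR, 0 < e & forall y, `|x - y| < e -> A y.
  by move=> /(@nbhs_normP _ RR^o) [e e_gt0 xeA]; exists e => // y /xeA.
have [e1 e1_gt0 P1e] := near_in _ _ Pa.
have [e2 e2_gt0 P2e] := near_in _ _ Pb.
have [e3 e3_gt0 Qe] := near_in _ _ Qc.
have [ab_gt0|] := ltP 0 (a ^+ 2 + b ^+ 2).
  have e_gt0 : 0 < Num.min e1 e2 by rewrite lt_min e1_gt0 e2_gt0.
  have [a' [b' [ab' aa' bb' neq]]] := circle_not_isolated ab_gt0 e_gt0.
  exists ((a', b'), c); split; first by rewrite /= ab'.
  - apply: PQW; split; last exact: nbhs_singleton.
    apply: P12; split.
    + by apply: P1e; apply: lt_le_trans aa' _; rewrite ge_min lexx.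
    + by apply: P2e; apply: lt_le_trans bb' _; rewrite ge_min lexx orbT.
  - by apply: contra neq => /eqP [-> ->].
have := sqr_ge0 a; have := sqr_ge0 b => b2 a2 ab_le0.
have bc_gt0 : 0 < b ^+ 2 + c ^+ 2 by lra.
have e_gt0 : 0 < Num.min e2 e3 by rewrite lt_min e2_gt0 e3_gt0.
have [b' [c' [bc' bb' cc' neq]]] := circle_not_isolated bc_gt0 e_gt0.
exists ((a, b'), c'); split; first by rewrite /= -addrA bc' addrA.
- apply: PQW; split.
  + apply: P12; split; first exact: nbhs_singleton.
    by apply: P2e; apply: lt_le_trans bb' _; rewrite ge_min lexx.
  + by apply: Qe; apply: lt_le_trans cc' _; rewrite ge_min lexx orbT.
- by apply: contra neq => /eqP [-> ->].
Qed.

Lemma unit_sphere_closed : closed unit_sphere.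
Proof.
have add (f g : RR * RR * RR -> RR) :
    continuous f -> continuous g -> continuous (fun p => f p + g p).
  by move=> f_cont g_cont p; exact: (@continuousD _ RR^o _ f g p (f_cont p) (g_cont p)).
have sq (f : RR * RR * RR -> RR) : continuous f -> continuous (fun p => f p ^+ 2).
  by move=> f_cont p; exact: (continuous_comp (f_cont p) (@exprn_continuous RR 2 _)).
have fst_cont (U V : topologicalType) : continuous (@fst U V) by move=> ?; exact: cvg_fst.
have snd_cont (U V : topologicalType) : continuous (@snd U V) by move=> ?; exact: cvg_snd.
have sqnorm_cont : continuous (fun p : RR * RR * RR => p.1.1 ^+ 2 + p.1.2 ^+ 2 + p.2 ^+ 2).
  apply: (add (fun p => p.1.1 ^+ 2 + p.1.2 ^+ 2) (fun p => p.2 ^+ 2));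
    last exact: (sq snd (snd_cont _ _)).
  apply: (add (fun p => p.1.1 ^+ 2) (fun p => p.1.2 ^+ 2)).
  - apply: (sq (fst \o fst)) => p; apply: continuous_comp; exact: fst_cont.
  - apply: (sq (snd \o fst)) => p; apply: continuous_comp; [exact: fst_cont | exact: snd_cont].
exact: (preimage_closed (fun p _ => sqnorm_cont p) (@closed_eq _ 1)).
Qed.

Lemma unit_sphere_compact : compact unit_sphere.
Proof.
apply: (subclosed_compact unit_sphere_closed
  (compact_setX (compact_setX (@segment_compact _ (-1) 1) (@segment_compact _ (-1) 1))
                (@segment_compact _ (-1) 1))).
case=> [[a b] c]; rewrite /unit_sphere /= => abc1.
have in_seg (x : RR) : x ^+ 2 <= 1 -> x \in `[-1, 1].
  by move=> x2; rewrite in_itv /= -ler_norml -(expr_le1 (n := 2)) // real_normK ?num_real.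
have := sqr_ge0 a; have := sqr_ge0 b; have := sqr_ge0 c => ? ? ?.
by split; first split; rewrite /= ?inE; apply: in_seg; lra.
Qed.

Lemma open_embedding_compact (A B : topologicalType) (h : A -> B) (K : set B) :
  injective h -> range h = K ->
  (forall O : set A, open O -> exists W : set B, open W /\ h @` O = W `&` K) ->
  compact K -> compact [set: A].
Proof.
move=> h_inj hK h_open K_compact F F_proper _.
have [|q [Kq Fq]] := K_compact (h @ F) _ _.
  by rewrite -hK; apply: (@filterE _ F) => x; exists x.
have [p _ hpq] : range h q by rewrite hK.
exists p; split => // B' D FB'; rewrite nbhsE => -[U [U_open Up] UD].
have [W [W_open hUW]] := h_open U U_open.
have Wq : W q.
  have : (h @` U) (h p) by exists p.
  by rewrite hUW hpq => -[].
have hF_hB' : F (h @^-1` (h @` B')) by apply: filterS FB' => x B'x; exists x.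
have [_ [[b B'b <-] Whb]] := Fq _ _ hF_hB' (open_nbhs_nbhs (conj W_open Wq)).
have : (h @` U) (h b) by rewrite hUW; split => //; rewrite -hK; exists b.
by case=> o Uo /h_inj ob; exists b; split => //; apply: UD; rewrite -ob.
Qed.

Lemma top_sphere_compact (S : topologicalType) : is_top_sphere S -> compact [set: S].
Proof.
case=> h [_ h_inj h_range h_open].
exact: open_embedding_compact h_inj h_range h_open unit_sphere_compact.
Qed.

Lemma cofinite_range_onto_top_sphere (A S : topologicalType) (f : A -> S) :
  compact [set: A] -> continuous f -> is_top_sphere S ->
  cofinite_set (range f) -> range f = setT.
Proof.
move=> A_compact f_cont [h [h_cont h_inj h_range h_open]] missed_finite.
have R3_hausdorff : hausdorff_space (RR * RR * RR)%type.
  exact: (@norm_hausdorff _ (RR^o * RR^o * RR^o)%type).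
apply/seteqP; split => // z _; apply: contrapT => z_missed.
have image_closed : closed ((h \o f) @` setT).
  apply: compact_closed R3_hausdorff _; apply: continuous_compact A_compact.
  by apply: continuous_subspaceT => x; apply: continuous_comp (f_cont x) (h_cont _).
have others_closed : closed (h @` (~` range f `\ z)).
  apply: (accessible_finite_set_closed.1 (hausdorff_accessible R3_hausdorff)).
  exact/finite_image/finite_setD.
have [p [p_sphere [p_not_image p_not_other] p_neq]] :
    exists p, [/\ unit_sphere p, (~` ((h \o f) @` setT) `&` ~` (h @` (~` range f `\ z))) p
                & p != h z].
  apply: unit_sphere_not_isolated; first by rewrite -h_range; exists z.
  apply: open_nbhs_nbhs; split; first by apply: openI; exact: closed_openC.
  split; first by case=> y _ /h_inj fyz; apply: z_missed; exists y.
  by case=> y [_ /eqP yz] /h_inj zy; rewrite zy eqxx in yz.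
have [y _ hyp] : range h p by rewrite h_range.
apply: p_not_other; exists y => //; split.
- by case=> x _ fxy; apply: p_not_image; exists x => //=; rewrite fxy.
- by move=> /= yz; rewrite -hyp yz eqxx in p_neq.
Qed.

Lemma leaf_adj_unique (V : finType) (e : rel V) (v x y : V) :
  is_leaf e v -> e v x -> e v y -> x = y.
Proof.
rewrite /is_leaf /valence => /eqP card1 vx vy.
have /card_le1_eqP adj_eq : (#|[set w | e v w]| <= 1)%N by rewrite card1.
by apply: adj_eq; rewrite in_setE.
Qed.

Lemma connect_lift (A B : finType) (eA : rel A) (eB : rel B) (F : A -> B) :
  (forall a b, eB (F a) b -> exists2 a', eA a a' & F a' = b) ->
  forall a b, connect eB (F a) b -> exists2 a', connect eA a a' & F a' = b.
Proof.
move=> lift a b /connectP [p]; elim: p a => [|c p IHp] a /=.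
  by move=> _ ->; exists a.
case/andP => /lift [a' aa' <-] path_p b_last.
have [a'' a'a'' <-] := IHp a' path_p b_last.
by exists a'' => //; apply: connect_trans (connect1 aa') a'a''.
Qed.

Lemma marked_pts_finite (T : tree_of_spheres) (v : tvert T) : finite_set (marked_pts v).
Proof. exact/finite_image/finite_finset. Qed.

Section TreeCover.
Variables (TY TZ : tree_of_spheres) (FF : tos_cover TY TZ).

Lemma cover_sphere_surjective (v : tvert TY) :
  is_internal (tadj (t:=TY)) v -> range (cf FF v) = setT.
Proof.
move=> v_int; have [f_onto _] := cf_covering FF v_int.
apply: cofinite_range_onto_top_sphere.
- exact: top_sphere_compact (tsphere_top v_int).
- exact: (cf_branched FF v_int).1.
- exact: tsphere_top (cF_internal FF v_int).
- apply: (sub_finite_set _ (marked_pts_finite (cF FF v))) => y y_missed.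
  apply: contrapT => y_unmarked; apply: y_missed.
  have : (~` marked_pts (cF FF v)) y by [].
  by rewrite -f_onto => -[x _ <-]; exists x.
Qed.

Lemma cover_lifts_neighbours_internal (v : tvert TY) (u : tvert TZ) :
  is_internal (tadj (t:=TY)) v -> tadj (cF FF v) u ->
  exists2 x, tadj v x & cF FF x = u.
Proof.
move=> v_int vu; have [f_onto _] := cf_covering FF v_int.
have [y _ fy] : range (cf FF v) (tinj (cF FF v) u).
  by rewrite cover_sphere_surjective.
have [[x vx yx] | y_unmarked] := pselect (marked_pts v y).
  exists x => //; apply: (tinj_inj (cF_internal FF v_int)) => //.
    exact: cF_edge.
  by rewrite -(cf_compat FF v_int vx) yx fy.
have : (~` marked_pts (cF FF v)) (cf FF v y) by rewrite -f_onto; exists y.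
by rewrite fy; case; exists u.
Qed.

Lemma cover_lifts_neighbours (v : tvert TY) (u : tvert TZ) :
  tadj (cF FF v) u -> exists2 x, tadj v x & cF FF x = u.
Proof.
move=> vu; have [v_leaf | v_int] := boolP (is_leaf (tadj (t:=TY)) v); last first.
  exact: cover_lifts_neighbours_internal.
have [x vx] : exists x, tadj v x.
  have /card_gt0P [x] : (0 < valence (tadj (t:=TY)) v)%N by rewrite (eqP v_leaf).
  by rewrite in_setE; exists x.
exists x => //; apply: leaf_adj_unique (cF_leaf FF v_leaf) _ vu.
exact: cF_edge.
Qed.

End TreeCover.

Theorem corollary2p20 (TY TZ : tree_of_spheres) (FF : tos_cover TY TZ) :
  (forall w : tvert TZ, exists v : tvert TY, cF FF v = w) /\
  (forall w1 w2 : tvert TZ, tadj w1 w2 ->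
     exists v1 v2 : tvert TY, [/\ tadj v1 v2, cF FF v1 = w1 & cF FF v2 = w2]).
Proof.
have lift := connect_lift (@cover_lifts_neighbours _ _ FF).
have vertex_onto (w : tvert TZ) : exists v, cF FF v = w.
  have [v0 _] : exists v0, v0 \in [set v | is_leaf (tadj (t:=TY)) v].
    by apply/card_gt0P; apply: leq_trans (tleaves_ge3 TY).
  have [_ _ TZ_connected _] := tadj_tree TZ.
  by have [v _ <-] := lift v0 w (TZ_connected _ _); exists v.
split=> // w1 w2 w12.
have [v1 v1w1] := vertex_onto w1; rewrite -v1w1 in w12 *.
have [v2 v12 <-] := cover_lifts_neighbours w12.
by exists v1, v2.
Qed.
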